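(* Let $\Theta\vdash t$ be an $\mathsf{F_{<:}^\top}$ term-in-context which is $\beta$-normal and is not a $\lambda$- or $\Lambda$-abstraction. If $\Theta\vdash_M t:T$, then $T$ is an $\mathsf{F_{<:}^\top}$ type (i.e. $\Theta\vdash^\top T$).
   Context: System $\mathsf{F_{<:}^{K\top}}$: raw types $T ::= \top \mid X \mid T\to T \mid \forall^{\mathsf K}(X<:T).T \mid \forall^\top(X<:T).T$, up to $\alpha$-conversion. Contexts $\Theta$: finite sequences of $X<:T$ or $x:T$ with distinct variables, each type well-formed over the preceding part. Subtyping $\Theta\vdash S<:T$: (Var) $\Theta,X<:T,\Theta'\vdash X<:T$; (Top) $T<:\top$; (Refl); (Trans); ($\to$) from $S'<:S$, $T<:T'$ infer $S\to T<:S'\to T'$; ($\forall$-Fun) from $\Theta,X<:S\vdash T<:T'$ infer $\forall^{\mathsf K}(X<:S).T<:\forall^{\mathsf K}(X<:S).T'$; ($\forall$-Loc) from $\Theta\vdash T_0<:S_0$, $\Theta,X<:S_0\vdash S_1<:T_1$ infer $\forall^{\mathsf K}(X<:S_0).S_1<:\forall^\top(X<:T_0).T_1$; ($\forall$-Top) from $\Theta\vdash T_0<:S_0$, $\Theta,X<:\top\vdash S_1<:T_1$ infer $\forall^\top(X<:S_0).S_1<:\forall^\top(X<:T_0).T_1$. Raw terms $t ::= \mathsf{top}\mid x\mid\lambda(x:T).t\mid\Lambda(X<:T).t\mid t\,t\mid t\{T\}$. $\Theta^*(T)=\Theta^*(S)$ if $T\equiv X$ and $X<:S$ occurs in $\Theta$;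 $\Theta^*(T)=T$ otherwise. Minimal typing $\Theta\vdash_M t:T$: $\Theta,x:T,\Theta'\vdash_M x:T$; $\Theta\vdash_M\mathsf{top}:\top$; from $\Theta,x:S\vdash_M t:T$ infer $\Theta\vdash_M\lambda(x:S).t:S\to T$; from $\Theta\vdash_M r:R$, $\Theta\vdash_M s:S$, $\Theta\vdash S<:S'$ with $\Theta^*(R)=S'\to T$ infer $\Theta\vdash_M r\,s:T$; from $\Theta,X<:S\vdash_M t:T$ infer $\Theta\vdash_M\Lambda(X<:S).t:\forall^{\mathsf K}(X<:S).T$; from $\Theta\vdash_M r:R$, $\Theta\vdash S<:S'$ with $\Theta^*(R)=\forall^{\mathsf K}(X<:S').T$ or $\forall^\top(X<:S').T$ infer $\Theta\vdash_M r\{S\}:T[S/X]$. An $\mathsf{F_{<:}^\top}$ type is one containing only $\forall^\top$ quantifiers; an $\mathsf{F_{<:}^\top}$ term-in-context $\Theta\vdash^\top t$ is one whose context and type annotations contain only $\mathsf{F_{<:}^\top}$ types. A term is $\beta$-normal if it has no subterm of the form $(\lambda(x:S).t)\,s$ or $(\Lambda(X<:S).t)\{R\}$. *)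

(* System F<:^{K,T} in de Bruijn representation (alpha-conversion
   is built in). Type variables and term variables use two separate de Bruijn
   index spaces: a type variable index counts only the type bindings X<:T of the
   context, a term variable index counts only the term bindings x:T.
   Contexts are lists whose HEAD is the most recent (rightmost) binding. *)
From Stdlib Require Import List Arith.
Import ListNotations.

Inductive ty : Type :=
| TTop : ty
| TVar : nat -> ty
| TArr : ty -> ty -> ty
| TAllK : ty -> ty -> ty   (* forall^K (X <: S). T ; T binds index 0 *)
| TAllT : ty -> ty -> ty.  (* forall^T (X <: S). T ; T binds index 0 *)

Inductive tm : Type :=
| ttop : tm
| tvar : nat -> tm
| tabs : ty -> tm -> tm
| ttabs : ty -> tm -> tm
| tapp : tm -> tm -> tm
| ttapp : tm -> ty -> tm.

Inductive bind : Type :=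
| BTy : ty -> bind   (* X <: T *)
| BTm : ty -> bind.

Definition ctx := list bind.

Fixpoint tshift (d c : nat) (T : ty) : ty :=
  match T with
  | TTop => TTop
  | TVar n => if c <=? n then TVar (n + d) else TVar n
  | TArr A B => TArr (tshift d c A) (tshift d c B)
  | TAllK A B => TAllK (tshift d c A) (tshift d (S c) B)
  | TAllT A B => TAllT (tshift d c A) (tshift d (S c) B)
  end.

Fixpoint tsubst (j : nat) (S : ty) (T : ty) : ty :=
  match T with
  | TTop => TTop
  | TVar n =>
      if n =? j then tshift j 0 S
      else if j <? n then TVar (pred n) else TVar n
  | TArr A B => TArr (tsubst j S A) (tsubst j S B)
  | TAllK A B => TAllK (tsubst j S A) (tsubst (Datatypes.S j) S B)
  | TAllT A B => TAllT (tsubst j S A) (tsubst (Datatypes.S j) S B)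
  end.

Definition topen (T S : ty) : ty := tsubst 0 S T.

Fixpoint ntys (G : ctx) : nat :=
  match G with
  | [] => 0
  | BTy _ :: G' => Datatypes.S (ntys G')
  | BTm _ :: G' => ntys G'
  end.

(* bound of type variable n, expressed in the scope of the whole context *)
Fixpoint get_tbound (G : ctx) (n : nat) : option ty :=
  match G with
  | [] => None
  | BTy T :: G' =>
      match n with
      | 0 => Some (tshift 1 0 T)
      | Datatypes.S n' => option_map (tshift 1 0) (get_tbound G' n')
      end
  | BTm _ :: G' => get_tbound G' n
  end.

(* type of term variable x, expressed in the scope of the whole context *)
Fixpoint get_var (G : ctx) (x : nat) : option ty :=
  match G with
  | [] => None
  | BTm T :: G' =>
      match x with
      | 0 => Some T
      | Datatypes.S x' => get_var G' x'
      end
  | BTy _ :: G' => option_map (tshift 1 0) (get_var G' x)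
  end.

(* Theta^*(T): Theta^*(X) = Theta^*(S) if X <: S in Theta, Theta^*(T) = T otherwise *)
Fixpoint expose (G : ctx) (T : ty) {struct G} : ty :=
  match T with
  | TVar n =>
      match G with
      | [] => T
      | BTy B :: G' =>
          match n with
          | 0 => tshift 1 0 (expose G' B)
          | Datatypes.S n' => tshift 1 0 (expose G' (TVar n'))
          end
      | BTm _ :: G' => expose G' T
      end
  | _ => T
  end.

Fixpoint wf_ty (k : nat) (T : ty) : Prop :=
  match T with
  | TTop => True
  | TVar n => n < k
  | TArr A B => wf_ty k A /\ wf_ty k B
  | TAllK A B => wf_ty k A /\ wf_ty (Datatypes.S k) B
  | TAllT A B => wf_ty k A /\ wf_ty (Datatypes.S k) B
  end.

Fixpoint wf_ctx (G : ctx) : Prop :=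
  match G with
  | [] => True
  | BTy T :: G' => wf_ty (ntys G') T /\ wf_ctx G'
  | BTm T :: G' => wf_ty (ntys G') T /\ wf_ctx G'
  end.

Fixpoint nvars (G : ctx) : nat :=
  match G with
  | [] => 0
  | BTm _ :: G' => Datatypes.S (nvars G')
  | BTy _ :: G' => nvars G'
  end.

Fixpoint wf_tm (k m : nat) (t : tm) : Prop :=
  match t with
  | ttop => True
  | tvar x => x < m
  | tabs U u => wf_ty k U /\ wf_tm k (Datatypes.S m) u
  | ttabs U u => wf_ty k U /\ wf_tm (Datatypes.S k) m u
  | tapp r s => wf_tm k m r /\ wf_tm k m s
  | ttapp r U => wf_tm k m r /\ wf_ty k U
  end.

Inductive sub : ctx -> ty -> ty -> Prop :=
| S_Var : forall G n T, get_tbound G n = Some T -> sub G (TVar n) T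
| S_Top : forall G T, sub G T TTop
| S_Refl : forall G T, sub G T T
| S_Trans : forall G A U T, sub G A U -> sub G U T -> sub G A T
| S_Arr : forall G U U' T T',
    sub G U' U -> sub G T T' -> sub G (TArr U T) (TArr U' T')
| S_AllFun : forall G U T T',
    sub (BTy U :: G) T T' -> sub G (TAllK U T) (TAllK U T')
| S_AllLoc : forall G S0 S1 T0 T1,
    sub G T0 S0 -> sub (BTy S0 :: G) S1 T1 ->
    sub G (TAllK S0 S1) (TAllT T0 T1)
| S_AllTop : forall G S0 S1 T0 T1,
    sub G T0 S0 -> sub (BTy TTop :: G) S1 T1 ->
    sub G (TAllT S0 S1) (TAllT T0 T1).

Inductive mtype : ctx -> tm -> ty -> Prop :=
| M_Var : forall G x T, get_var G x = Some T -> mtype G (tvar x) T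
| M_Top : forall G, mtype G ttop TTop
| M_Abs : forall G U t T,
    mtype (BTm U :: G) t T -> mtype G (tabs U t) (TArr U T)
| M_App : forall G r s R U U' T,
    mtype G r R -> mtype G s U -> sub G U U' ->
    expose G R = TArr U' T -> mtype G (tapp r s) T
| M_TAbs : forall G U t T,
    mtype (BTy U :: G) t T -> mtype G (ttabs U t) (TAllK U T)
| M_TAppK : forall G r R U U' T,
    mtype G r R -> sub G U U' -> expose G R = TAllK U' T ->
    mtype G (ttapp r U) (topen T U)
| M_TAppT : forall G r R U U' T,
    mtype G r R -> sub G U U' -> expose G R = TAllT U' T ->
    mtype G (ttapp r U) (topen T U).

Fixpoint is_top_ty (T : ty) : Prop :=
  match T with
  | TTop => True
  | TVar _ => True
  | TArr A B => is_top_ty A /\ is_top_ty B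
  | TAllK _ _ => False
  | TAllT A B => is_top_ty A /\ is_top_ty B
  end.

Fixpoint is_top_ctx (G : ctx) : Prop :=
  match G with
  | [] => True
  | BTy T :: G' => is_top_ty T /\ is_top_ctx G'
  | BTm T :: G' => is_top_ty T /\ is_top_ctx G'
  end.

Fixpoint is_top_tm (t : tm) : Prop :=
  match t with
  | ttop => True
  | tvar _ => True
  | tabs U u => is_top_ty U /\ is_top_tm u
  | ttabs U u => is_top_ty U /\ is_top_tm u
  | tapp r s => is_top_tm r /\ is_top_tm s
  | ttapp r U => is_top_tm r /\ is_top_ty U
  end.

Fixpoint beta_normal (t : tm) : Prop :=
  match t with
  | ttop => True
  | tvar _ => True
  | tabs _ u => beta_normal u
  | ttabs _ u => beta_normal u
  | tapp r s =>
      beta_normal r /\ beta_normal s /\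
      (match r with tabs _ _ => False | _ => True end)
  | ttapp r _ =>
      beta_normal r /\
      (match r with ttabs _ _ => False | _ => True end)
  end.

Definition is_abstraction (t : tm) : Prop :=
  match t with
  | tabs _ _ => True
  | ttabs _ _ => True
  | _ => False
  end.

(* Exposure, shifting and
   substitution preserve F<:^T types, so by induction every term that is not
   an abstraction gets an F<:^T type, as long as the operators met on the way
   are not abstractions either.  Beta-normality rules out a lambda applied to
   a term and a Lambda applied to a type; the two remaining combinations are
   ill-typed, since the minimal type of an abstraction is an arrow resp. a
   forall^K, exposes to itself, and thus has the wrong shape. *)
From Stdlib Require Import Arith Lia.

Lemma tshift_top T d c : is_top_ty T -> is_top_ty (tshift d c T).
Proof.
  revert c; induction T; intros c HT; simpl in *;
    try (destruct (c <=? n)); try (split; [apply IHT1 | apply IHT2]); tauto.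
Qed.

Lemma wf_ty_tshift T d c k : wf_ty k T -> wf_ty (k + d) (tshift d c T).
Proof.
  revert c k; induction T; intros c k HT; simpl in *; try tauto.
  - destruct (c <=? n); simpl; lia.
  - split; [apply IHT1 | apply IHT2]; tauto.
  - split; [apply IHT1 | apply (IHT2 _ (S k))]; tauto.
  - split; [apply IHT1 | apply (IHT2 _ (S k))]; tauto.
Qed.

Lemma tsubst_top T j U : is_top_ty T -> is_top_ty U -> is_top_ty (tsubst j U T).
Proof.
  revert j; induction T; intros j HT HU; simpl in *;
    try (split; [apply IHT1 | apply IHT2]; tauto); try tauto.
  destruct (n =? j); [now apply tshift_top |].
  destruct (j <? n); exact I.
Qed.

Lemma wf_ty_tsubst T j k U :
  wf_ty (S k) T -> j <= k -> wf_ty (k - j) U -> wf_ty k (tsubst j U T).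
Proof.
  revert j k; induction T; intros j k HT Hj HU; simpl in *; try tauto.
  - destruct (Nat.eqb_spec n j).
    + replace k with (k - j + j) by lia. now apply wf_ty_tshift.
    + destruct (Nat.ltb_spec j n); simpl; lia.
  - split; [apply IHT1 | apply IHT2]; tauto || lia.
  - split; [apply IHT1 | apply IHT2]; tauto || lia.
  - split; [apply IHT1 | apply IHT2]; tauto || lia.
Qed.

Lemma topen_top_wf k T U :
  is_top_ty T -> wf_ty (S k) T -> is_top_ty U -> wf_ty k U ->
  is_top_ty (topen T U) /\ wf_ty k (topen T U).
Proof.
  intros HT HwT HU HwU; split.
  - now apply tsubst_top.
  - apply wf_ty_tsubst; [exact HwT | lia | now rewrite Nat.sub_0_r].
Qed.

Lemma tshift1_top_wf k T :
  is_top_ty T /\ wf_ty k T -> is_top_ty (tshift 1 0 T) /\ wf_ty (S k) (tshift 1 0 T).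
Proof.
  intros [HT HwT]; split.
  - now apply tshift_top.
  - rewrite <- Nat.add_1_r. now apply wf_ty_tshift.
Qed.

Lemma get_var_top_wf {G x T} :
  wf_ctx G -> is_top_ctx G -> get_var G x = Some T ->
  is_top_ty T /\ wf_ty (ntys G) T.
Proof.
  revert x T; induction G as [|[B|B] G IH]; intros x T Hw Ht Hx; simpl in *.
  - discriminate.
  - destruct (get_var G x) as [T'|] eqn:Ex; simpl in Hx; [|discriminate].
    injection Hx as <-. apply tshift1_top_wf, (IH x); tauto.
  - destruct x as [|x]; [injection Hx as <-; tauto | apply (IH x); tauto].
Qed.

Lemma expose_top_wf {G T} :
  wf_ctx G -> is_top_ctx G -> is_top_ty T -> wf_ty (ntys G) T ->
  is_top_ty (expose G T) /\ wf_ty (ntys G) (expose G T).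
Proof.
  revert T; induction G as [|[B|B] G IH]; intros T Hw Ht HT HwT;
    destruct T; simpl in *; try tauto.
  - destruct n as [|n]; apply tshift1_top_wf, IH; simpl; tauto || lia.
  - apply IH; tauto.
Qed.

Lemma expose_not_tvar G T : (forall n, T <> TVar n) -> expose G T = T.
Proof.
  intros HT; destruct T; [destruct G; reflexivity | now destruct (HT n)
    | destruct G; reflexivity ..].
Qed.

Lemma mtype_tabs_inv {G U u T} : mtype G (tabs U u) T -> exists T', T = TArr U T'.
Proof. inversion 1; eauto. Qed.

Lemma mtype_ttabs_inv {G U u T} : mtype G (ttabs U u) T -> exists T', T = TAllK U T'.
Proof. inversion 1; eauto. Qed.

Lemma tapp_operator_not_abstraction {G r s R A B} :
  beta_normal (tapp r s) -> mtype G r R -> expose G R = TArr A B ->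
  ~ is_abstraction r.
Proof.
  intros Hb Hr HR; destruct r; simpl in *; try tauto.
  destruct (mtype_ttabs_inv Hr) as [T' ->].
  rewrite expose_not_tvar in HR by discriminate. discriminate.
Qed.

Lemma ttapp_operator_not_abstraction {G r S R} :
  beta_normal (ttapp r S) -> mtype G r R -> (forall A B, expose G R <> TArr A B) ->
  ~ is_abstraction r.
Proof.
  intros Hb Hr HR; destruct r; simpl in *; try tauto.
  destruct (mtype_tabs_inv Hr) as [T' ->].
  rewrite expose_not_tvar in HR by discriminate. now destruct (HR t T').
Qed.

Theorem lemma7p2 (G : ctx) (t : tm) (T : ty) :
  wf_ctx G -> wf_tm (ntys G) (nvars G) t ->
  is_top_ctx G -> is_top_tm t ->
  beta_normal t -> ~ is_abstraction t ->
  mtype G t T ->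
  is_top_ty T /\ wf_ty (ntys G) T.
Proof.
  intros Hw Hwt Ht Htt Hb Habs Hty; revert Hw Hwt Ht Htt Hb Habs.
  induction Hty as [G x T Hx | G | | G r s R U U' T Hr IHr _ _ _ HR | |
      G r R U U' T Hr IHr _ HR | G r R U U' T Hr IHr _ HR];
    intros Hw Hwt Ht Htt Hb Habs; try (exfalso; exact (Habs I)).
  - exact (get_var_top_wf Hw Ht Hx).
  - split; exact I.
  - assert (Hr' : ~ is_abstraction r)
      by exact (tapp_operator_not_abstraction Hb Hr HR).
    destruct (IHr Hw (proj1 Hwt) Ht (proj1 Htt) (proj1 Hb) Hr') as [HRt HRw].
    destruct (expose_top_wf Hw Ht HRt HRw) as [HEt HEw].
    rewrite HR in HEt, HEw; simpl in *; tauto.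
  - assert (Hr' : ~ is_abstraction r)
      by (apply (ttapp_operator_not_abstraction Hb Hr); congruence).
    destruct (IHr Hw (proj1 Hwt) Ht (proj1 Htt) (proj1 Hb) Hr') as [HRt HRw].
    destruct (expose_top_wf Hw Ht HRt HRw) as [HEt _].
    rewrite HR in HEt; contradiction.
  - assert (Hr' : ~ is_abstraction r)
      by (apply (ttapp_operator_not_abstraction Hb Hr); congruence).
    destruct (IHr Hw (proj1 Hwt) Ht (proj1 Htt) (proj1 Hb) Hr') as [HRt HRw].
    destruct (expose_top_wf Hw Ht HRt HRw) as [HEt HEw].
    rewrite HR in HEt, HEw; simpl in *.
    apply topen_top_wf; [tauto | tauto | exact (proj2 Htt) | exact (proj2 Hwt)].
Qed.
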